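(* Let $k$ be a field, $Q=k[x,y,z]$, $I\subseteq Q$ a nonzero monomial ideal contained in $(x,y,z)^2$, and $R=Q/I$. Then for every $1\le p\le 3-\operatorname{depth}(R)$, the Koszul homology $H_p(K^R)$ has a $k$-basis consisting of classes of cycles of the form $\overline{u}\,e_{x_{i_1}\cdots x_{i_p}}$, where $\{x_{i_1},\dots,x_{i_p}\}\subseteq\{x,y,z\}$ and $u\in I:(x_{i_1},\dots,x_{i_p})$ is a monomial, $\overline u$ denoting its residue class in $R$.
   Context: $K^R=R\otimes_Q K^Q$ is the Koszul complex of $R$ on the variables, realized as the exterior algebra on a free $R$-module with basis $e_x,e_y,e_z$ (variables ordered $x<y<z$); $e_{x_{i_1}\cdots x_{i_p}}=e_{x_{i_1}}\wedge\cdots\wedge e_{x_{i_p}}$ for $i_1<\dots<i_p$, and $\partial(e_{x_{i_1}\cdots x_{i_p}})=\sum_{j}(-1)^{j-1}x_{i_j}e_{x_{i_1}\cdots\widehat{x_{i_j}}\cdots x_{i_p}}$. $H_p(K^R)$ is its $p$-th homology. *)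

From HB Require Import structures.
From mathcomp Require Import all_boot all_order all_algebra.
From mathcomp Require Import mpoly.

Set Implicit Arguments.
Unset Strict Implicit.
Unset Printing Implicit Defensive.
Import GRing.Theory.
Local Open Scope ring_scope.

(* Q = k[x,y,z] is {mpoly k[3]}; the variables x<y<z are 'X_0, 'X_1, 'X_2. *)

Definition ideal_gen (k : fieldType) (s : seq {mpoly k[3]}) (f : {mpoly k[3]}) : Prop :=
  exists c : 'I_(size s) -> {mpoly k[3]}, f = \sum_(i < size s) c i * s`_i.

Definition mon_gens (k : fieldType) (G : seq 'X_{1..3}) : seq {mpoly k[3]} :=
  [seq 'X_[m] | m <- G].

Definition var_gens (k : fieldType) : seq {mpoly k[3]} :=
  [seq 'X_i | i <- enum 'I_3].

Definition msq_gens (k : fieldType) : seq {mpoly k[3]} :=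
  [seq 'X_i * 'X_j | i <- enum 'I_3, j <- enum 'I_3].

Definition subset_gens (k : fieldType) (S : {set 'I_3}) : seq {mpoly k[3]} :=
  [seq 'X_i | i <- enum S].

(* Chains of the Koszul complex K^Q (lifts of chains of K^R = R (x) K^Q):
   a chain is f : {set 'I_3} -> Q, f S being the coefficient of e_S. *)
Definition chain (k : fieldType) := {set 'I_3} -> {mpoly k[3]}.

(* Koszul differential:
   d(e_S) = sum_j (-1)^(j-1) x_{i_j} e_{S \ i_j}; hence the coefficient of
   e_T in d f is sum_{i notin T} (-1)^{#{l in T | l < i}} x_i f(T u {i}). *)
Definition koszul_d (k : fieldType) (f : chain k) : chain k :=
  fun T => \sum_(i < 3 | i \notin T)
             (-1) ^+ #|[set l in T | (val l < val i)%N]| * 'X_i * f (i |: T).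

Definition chain_deg (k : fieldType) (p : nat) (f : chain k) : Prop :=
  forall S : {set 'I_3}, #|S| <> p -> f S = 0.

(* p-cycles of K^R = K^Q / I K^Q, represented by lifts to K^Q *)
Definition is_cycle (k : fieldType) (G : seq 'X_{1..3}) (p : nat) (f : chain k) : Prop :=
  chain_deg p f /\ forall T, ideal_gen (mon_gens k G) (koszul_d f T).

Definition is_boundary (k : fieldType) (G : seq 'X_{1..3}) (p : nat) (f : chain k) : Prop :=
  chain_deg p f /\
  exists g : chain k, chain_deg p.+1 g /\
    forall T, ideal_gen (mon_gens k G) (f T - koszul_d g T).

Definition is_regular_seq (k : fieldType) (G : seq 'X_{1..3}) (f : seq {mpoly k[3]}) : Prop :=
  (forall i, (i < size f)%N -> ideal_gen (var_gens k) f`_i) /\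
  (forall i, (i < size f)%N -> forall g,
      ideal_gen (mon_gens k G ++ take i f) (f`_i * g) ->
      ideal_gen (mon_gens k G ++ take i f) g) /\
  ~ ideal_gen (mon_gens k G ++ f) 1.

Definition is_depth (k : fieldType) (G : seq 'X_{1..3}) (d : nat) : Prop :=
  (exists f : seq {mpoly k[3]}, size f = d /\ is_regular_seq G f) /\
  ~ (exists f : seq {mpoly k[3]}, size f = d.+1 /\ is_regular_seq G f).

Definition comb (k : fieldType) (n : nat) (S : 'I_n -> {set 'I_3})
  (m : 'I_n -> 'X_{1..3}) (c : 'I_n -> k) : chain k :=
  fun T => \sum_(j < n) c j *: (if T == S j then 'X_[m j] else 0).

(* The complex K^R is Z^3-graded. In multidegree a its strand has the basis
   x^(a - e_S) e_S, where S runs over the faces of a: the subsets S of {x, y, z}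
   with e_S <= a and x^(a - e_S) not in I. The faces of a are closed upwards
   among the subsets of the support of a, and the differential of the strand is
   the Koszul differential on subsets. So every strand is one of finitely many
   small complexes, one for each such family of subsets. For each family and
   each p a certificate with integer entries, checked by computation, exhibits
   minimal p-faces whose classes form a basis of the p-th homology, together
   with a homotopy proving that they span and dual cocycles proving that they
   are independent. A minimal face S of a gives the cycle x^(a - e_S) e_S, and
   minimality says exactly that x^(a - e_S) lies in I : (x_S). Lastly, if some
   exponent of a exceeds the exponents of all generators of I, the faces of a
   form a cone and the strand is exact, so only finitely many multidegrees
   contribute basis elements. *)

From HB Require Import structures.
From mathcomp Require Import all_boot all_order all_algebra.
From mathcomp Require Import mpoly zify.

Set Implicit Arguments.
Unset Strict Implicit.
Unset Printing Implicit Defensive.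
Import GRing.Theory.
Local Open Scope ring_scope.

Implicit Types (S T U V : {set 'I_3}) (m a : 'X_{1..3}) (G : seq 'X_{1..3}).

(** * The Koszul differential on subsets *)

Definition kdiff (R : pzRingType) (z : {set 'I_3} -> R) (T : {set 'I_3}) : R :=
  \sum_(i < 3 | i \notin T) (-1) ^+ #|[set l in T | (val l < val i)%N]| * z (i |: T).

Section KoszulDifferential.
Variable R : pzRingType.
Implicit Types z : {set 'I_3} -> R.

Lemma eq_kdiff z1 z2 T :
  (forall i, i \notin T -> z1 (i |: T) = z2 (i |: T)) -> kdiff z1 T = kdiff z2 T.
Proof. by move=> eq_z; apply: eq_bigr => i /eq_z ->. Qed.

Lemma kdiff_sum (I : Type) (r : seq I) (F : I -> {set 'I_3} -> R) T :
  kdiff (fun V => \sum_(x <- r) F x V) T = \sum_(x <- r) kdiff (F x) T.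
Proof.
rewrite /kdiff exchange_big; apply: eq_bigr => i _.
by rewrite mulr_sumr.
Qed.

Lemma kdiffMr z c T : kdiff (fun V => z V * c) T = kdiff z T * c.
Proof. by rewrite /kdiff mulr_suml; apply: eq_bigr => i _; rewrite mulrA. Qed.

Lemma kdiff_delta z T : kdiff z T = \sum_U kdiff (fun V => (V == U)%:R) T * z U.
Proof.
under eq_bigr do rewrite -kdiffMr.
rewrite -kdiff_sum; apply: eq_kdiff => i _.
rewrite (bigD1 (i |: T)) //= eqxx mul1r big1 ?addr0 // => U /negbTE.
by rewrite eq_sym => ->; rewrite mul0r.
Qed.

End KoszulDifferential.

Lemma kdiff_intr (R : pzRingType) (z : {set 'I_3} -> int) T :
  (kdiff z T)%:~R = kdiff (fun V => (z V)%:~R) T :> R.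
Proof.
rewrite /kdiff rmorph_sum; apply: eq_bigr => i _.
by rewrite rmorphM rmorphXn /= rmorphN1.
Qed.

Lemma intr_sum (R : pzRingType) (I : Type) (r : seq I) (F : I -> int) :
  (\sum_(x <- r) F x)%:~R = \sum_(x <- r) (F x)%:~R :> R.
Proof. exact: (big_morph _ (@intrD R) (mulr0z 1)). Qed.

Lemma kdiff_delta_intr (R : pzRingType) U T :
  (kdiff (fun V => (V == U)%:Z) T)%:~R = kdiff (fun V => (V == U)%:R) T :> R.
Proof. by rewrite kdiff_intr; apply: eq_kdiff => i _; rewrite -pmulrn. Qed.

(** * Subsets of {x, y, z} as binary codes *)

(* Big operators and finite sets do not compute, so the finite check below runs
   on subsets of {0, 1, 2} encoded as numbers s < 8, element i being bit i. *)
Definition bit (s i : nat) : bool := odd (s %/ 2 ^ i).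

Definition popcount (s : nat) : nat := count (bit s) (iota 0 3).

Definition count_below (s i : nat) : nat := count (bit s) (iota 0 i).

Definition kdiff_code (R : pzRingType) (h : nat -> R) (t : nat) : R :=
  foldr (fun i acc => (if bit t i then 0 else (-1) ^+ count_below t i * h (t + 2 ^ i)%N) + acc)
    0 (iota 0 3).

Definition sum_codes (R : nmodType) (F : nat -> R) : R :=
  foldr (fun u acc => F u + acc) 0 (iota 0 8).

Definition all_codes (P : pred nat) : bool := all P (iota 0 8).

Definition subset_code (s u : nat) : bool := all (fun i => bit s i ==> bit u i) (iota 0 3).

Definition set_of_code (s : nat) : {set 'I_3} := [set i : 'I_3 | bit s i].

Definition code_of_set (S : {set 'I_3}) : nat := (\sum_(i < 3) (i \in S) * 2 ^ i)%N.

Lemma ord3P (P : 'I_3 -> Prop) :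
  P ord0 -> P (lift ord0 ord0) -> P (lift ord0 (lift ord0 ord0)) -> forall i, P i.
Proof.
move=> P0 P1 P2 [[|[|[|//]]] lt_i3].
- by rewrite (_ : Ordinal lt_i3 = ord0) //; apply/val_inj.
- by rewrite (_ : Ordinal lt_i3 = lift ord0 ord0) //; apply/val_inj.
- by rewrite (_ : Ordinal lt_i3 = lift ord0 (lift ord0 ord0)) //; apply/val_inj.
Qed.

Lemma card_set3 (A : {set 'I_3}) : #|A| = (\sum_(i < 3) (i \in A))%N.
Proof. by rewrite -sum1_card big_mkcond; apply: eq_bigr => i _; case: (i \in A). Qed.

Lemma code_of_set_lt S : (code_of_set S < 8)%N.
Proof.
rewrite /code_of_set !big_ord_recl big_ord0 /=.
by case: (ord0 \in S); case: (lift ord0 ord0 \in S); case: (lift ord0 (lift ord0 ord0) \in S).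
Qed.

Lemma bit_code_of_set S (i : 'I_3) : bit (code_of_set S) i = (i \in S).
Proof.
rewrite /code_of_set !big_ord_recl big_ord0 /=.
by elim/ord3P: i;
  case: (ord0 \in S); case: (lift ord0 ord0 \in S); case: (lift ord0 (lift ord0 ord0) \in S).
Qed.

Lemma code_of_setK : cancel code_of_set set_of_code.
Proof. by move=> S; apply/setP => i; rewrite inE bit_code_of_set. Qed.

Lemma set_of_codeK s : (s < 8)%N -> code_of_set (set_of_code s) = s.
Proof.
rewrite /code_of_set !big_ord_recl big_ord0 /= !inE.
by case: s => [|[|[|[|[|[|[|[|s]]]]]]]].
Qed.

Lemma code_of_set_inj : injective code_of_set.
Proof. exact: can_inj code_of_setK. Qed.

Lemma popcount_code S : popcount (code_of_set S) = #|S|.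
Proof.
rewrite -{2}[S]code_of_setK; move: (code_of_set S) (code_of_set_lt S) => s.
rewrite card_set3 !big_ord_recl big_ord0 /= !inE.
by case: s => [|[|[|[|[|[|[|[|s]]]]]]]].
Qed.

Lemma count_below_code S (i : 'I_3) :
  count_below (code_of_set S) i = #|[set l in S | (val l < val i)%N]|.
Proof.
rewrite -{2}[S]code_of_setK; move: (code_of_set S) (code_of_set_lt S) => s.
rewrite card_set3 !big_ord_recl big_ord0 /= !inE.
by elim/ord3P: i; case: s => [|[|[|[|[|[|[|[|s]]]]]]]].
Qed.

Lemma code_of_setU1 S (i : 'I_3) :
  i \notin S -> code_of_set (i |: S) = (code_of_set S + 2 ^ i)%N.
Proof.
move=> iNS; rewrite /code_of_set (bigD1 i) // [in RHS](bigD1 i) //= setU11 (negbTE iNS).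
rewrite mul1n mul0n add0n [in LHS]addnC; congr (_ + _)%N; apply: eq_bigr => j neq_ji.
by rewrite in_setU1 (negbTE neq_ji).
Qed.

Lemma code_of_setD1 S (i : 'I_3) :
  i \in S -> code_of_set (S :\ i) = (code_of_set S - 2 ^ i)%N.
Proof. by move=> iS; rewrite -{2}(setD1K iS) code_of_setU1 ?setD11 // addnK. Qed.

Lemma subset_code_of_set S U : subset_code (code_of_set S) (code_of_set U) = (S \subset U).
Proof.
apply/allP/subsetP => [sub_SU i | sub_SU i].
  by move: (sub_SU i); rewrite mem_iota ltn_ord !bit_code_of_set => /(_ isT) /implyP.
rewrite mem_iota /= => lt_i3; rewrite -[i]/(val (Ordinal lt_i3)) !bit_code_of_set.
by apply/implyP/sub_SU.
Qed.

Lemma sum_codesE (V : nmodType) (F : nat -> V) :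
  sum_codes F = \sum_(S : {set 'I_3}) F (code_of_set S).
Proof.
have -> : sum_codes F = \sum_(s < 8) F s.
  by rewrite -(big_mkord xpredT) /index_iota /sum_codes; elim: (iota 0 8) => [|s r /= ->];
     rewrite ?big_nil ?big_cons.
rewrite (reindex (fun S => Ordinal (code_of_set_lt S))) //=.
exists (fun s : 'I_8 => set_of_code s) => [S _|s _]; first exact: code_of_setK.
by apply/val_inj; rewrite /= set_of_codeK.
Qed.

Lemma all_codesP (P : pred nat) : reflect (forall S, P (code_of_set S)) (all_codes P).
Proof.
apply: (iffP allP) => [P_all S | P_code s]; first by rewrite P_all // mem_iota code_of_set_lt.
by rewrite mem_iota => /= lt_s8; rewrite -(set_of_codeK lt_s8).
Qed.

Lemma kdiff_codeE (R : pzRingType) (h : nat -> R) T :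
  kdiff_code h (code_of_set T) = kdiff (fun V => h (code_of_set V)) T.
Proof.
have term (i : 'I_3) : (if bit (code_of_set T) i then 0
     else (-1) ^+ count_below (code_of_set T) i * h (code_of_set T + 2 ^ i)%N)
  = (if i \notin T then (-1) ^+ #|[set l in T | (val l < val i)%N]| * h (code_of_set (i |: T))
     else 0).
  by rewrite bit_code_of_set; case: ifPn => iT //=; rewrite count_below_code code_of_setU1.
rewrite /kdiff big_mkcond !big_ord_recl big_ord0 /=.
by rewrite -!term /kdiff_code /= addr0.
Qed.

(** * Homology certificates for the local complexes *)

Definition delta (u v : nat) : int := (u == v)%:Z.

(* A certificate for a family D of faces and a degree p consists of a basis B of
   minimal p-faces and integer matrices C, H, M, L with 1 = C + dH + Md on the
   p-faces, C supported on the rows of B, and L equal to the identity on B and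
   vanishing on boundaries. Integer entries make it valid in every
   characteristic. *)
Record cert := Cert {
  cert_basis : seq nat;
  cert_coord : seq (nat * nat * int);
  cert_homot : seq (nat * nat * int);
  cert_corr : seq (nat * nat * int);
  cert_dual : seq (nat * nat * int) }.

Definition entry (E : seq (nat * nat * int)) (s u : nat) : int :=
  foldr (fun e acc => if (e.1.1 == s) && (e.1.2 == u) then e.2 + acc else acc) 0 E.

Section CertCheck.
Variables (D : nat -> bool) (p : nat) (c : cert).

Definition face_code (q s : nat) : bool := D s && (popcount s == q).

Definition minimal_code (s : nat) : bool := all (fun i => bit s i ==> ~~ D (s - 2 ^ i)) (iota 0 3).

Definition basis_codes : seq nat :=
  [seq s <- cert_basis c | [&& s < 8, face_code p s & minimal_code s]]%N.

Definition coord_code (s u : nat) : int :=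
  if s \in basis_codes then entry (cert_coord c) s u else 0.
Definition homot_code (v u : nat) : int :=
  if face_code p.+1 v then entry (cert_homot c) v u else 0.
Definition corr_code (s t : nat) : int :=
  if face_code p.-1 t then entry (cert_corr c) s t else 0.
Definition dual_code (s u : nat) : int :=
  if face_code p u then entry (cert_dual c) s u else 0.

Definition cone_code : bool :=
  has (fun j => all_codes (fun s => bit s j || (D s == D (s + 2 ^ j)%N))) (iota 0 3).

Definition cert_check : bool :=
  [&& all_codes (fun s => all_codes (fun u => face_code p s && face_code p u ==>
        (delta s u == coord_code s u + kdiff_code (homot_code^~ u) s
                      + sum_codes (fun t => corr_code s t * kdiff_code (delta^~ u) t)))),
      all (fun s => all (fun u => dual_code s u == delta s u) basis_codes) basis_codes,
      all (fun s => all_codes (fun v => face_code p.+1 v ==>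
        (sum_codes (fun u => dual_code s u * kdiff_code (delta^~ v) u) == 0))) basis_codes
    & cone_code ==> (basis_codes == [::])].

End CertCheck.

Definition admissible_code (D : nat -> bool) : bool :=
  has (fun t => all_codes (fun s => D s ==> subset_code s t) &&
                all_codes (fun s => all_codes (fun u =>
                  D s && subset_code s u && subset_code u t ==> D u)))
    (iota 0 8).

Fixpoint bitseqs (n : nat) : seq (seq bool) :=
  if n is n'.+1 then [seq b :: l | b <- [:: true; false], l <- bitseqs n'] else [:: [::]].

Lemma mem_bitseqs (l : seq bool) : l \in bitseqs (size l).
Proof.
by elim: l => [|b l IHl] //=; case: b; rewrite !mem_cat map_f ?orbT.
Qed.

Definition nat_of_bits (l : seq bool) : nat := foldr (fun (b : bool) n => b + n.*2)%N 0%N l.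

(* Entries (code of the family of faces, p, certificate); the families that are
   not listed have no p-faces and get the empty certificate. *)
Definition cert_table : seq (nat * nat * cert) := [::
  (2, 1, Cert [:: 1] [:: (1, 1, 1)] [::] [::] [:: (1, 1, 1)]);
  (3, 1, Cert [::] [::] [::] [:: (1, 0, 1)] [::]);
  (4, 1, Cert [:: 2] [:: (2, 2, 1)] [::] [::] [:: (2, 2, 1)]);
  (5, 1, Cert [::] [::] [::] [:: (2, 0, 1)] [::]);
  (8, 2, Cert [:: 3] [:: (3, 3, 1)] [::] [::] [:: (3, 3, 1)]);
  (10, 1, Cert [::] [::] [:: (3, 1, -1)] [::] [::]);
  (10, 2, Cert [::] [::] [::] [:: (3, 1, -1)] [::]);
  (12, 1, Cert [::] [::] [:: (3, 2, 1)] [::] [::]);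
  (12, 2, Cert [::] [::] [::] [:: (3, 2, 1)] [::]);
  (14, 1, Cert [:: 1] [:: (1, 1, 1); (1, 2, 1)] [:: (3, 2, 1)] [::] [:: (1, 1, 1); (1, 2, 1)]);
  (14, 2, Cert [::] [::] [::] [:: (3, 1, -1)] [::]);
  (15, 1, Cert [::] [::] [:: (3, 2, 1)] [:: (1, 0, 1)] [::]);
  (15, 2, Cert [::] [::] [::] [:: (3, 1, -1)] [::]);
  (16, 1, Cert [:: 4] [:: (4, 4, 1)] [::] [::] [:: (4, 4, 1)]);
  (17, 1, Cert [::] [::] [::] [:: (4, 0, 1)] [::]);
  (32, 2, Cert [:: 5] [:: (5, 5, 1)] [::] [::] [:: (5, 5, 1)]);
  (34, 1, Cert [::] [::] [:: (5, 1, -1)] [::] [::]);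
  (34, 2, Cert [::] [::] [::] [:: (5, 1, -1)] [::]);
  (48, 1, Cert [::] [::] [:: (5, 4, 1)] [::] [::]);
  (48, 2, Cert [::] [::] [::] [:: (5, 4, 1)] [::]);
  (50, 1, Cert [:: 1] [:: (1, 1, 1); (1, 4, 1)] [:: (5, 4, 1)] [::] [:: (1, 1, 1); (1, 4, 1)]);
  (50, 2, Cert [::] [::] [::] [:: (5, 1, -1)] [::]);
  (51, 1, Cert [::] [::] [:: (5, 4, 1)] [:: (1, 0, 1)] [::]);
  (51, 2, Cert [::] [::] [::] [:: (5, 1, -1)] [::]);
  (64, 2, Cert [:: 6] [:: (6, 6, 1)] [::] [::] [:: (6, 6, 1)]);
  (68, 1, Cert [::] [::] [:: (6, 2, -1)] [::] [::]);
  (68, 2, Cert [::] [::] [::] [:: (6, 2, -1)] [::]);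
  (80, 1, Cert [::] [::] [:: (6, 4, 1)] [::] [::]);
  (80, 2, Cert [::] [::] [::] [:: (6, 4, 1)] [::]);
  (84, 1, Cert [:: 2] [:: (2, 2, 1); (2, 4, 1)] [:: (6, 4, 1)] [::] [:: (2, 2, 1); (2, 4, 1)]);
  (84, 2, Cert [::] [::] [::] [:: (6, 2, -1)] [::]);
  (85, 1, Cert [::] [::] [:: (6, 4, 1)] [:: (2, 0, 1)] [::]);
  (85, 2, Cert [::] [::] [::] [:: (6, 2, -1)] [::]);
  (128, 3, Cert [:: 7] [:: (7, 7, 1)] [::] [::] [:: (7, 7, 1)]);
  (136, 2, Cert [::] [::] [:: (7, 3, 1)] [::] [::]);
  (136, 3, Cert [::] [::] [::] [:: (7, 3, 1)] [::]);
  (160, 2, Cert [::] [::] [:: (7, 5, -1)] [::] [::]);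
  (160, 3, Cert [::] [::] [::] [:: (7, 5, -1)] [::]);
  (168, 2, Cert [:: 3] [:: (3, 3, 1); (3, 5, 1)] [:: (7, 5, -1)] [::] [:: (3, 3, 1); (3, 5, 1)]);
  (168, 3, Cert [::] [::] [::] [:: (7, 3, 1)] [::]);
  (170, 1, Cert [::] [::] [:: (3, 1, -1)] [::] [::]);
  (170, 2, Cert [::] [::] [:: (7, 5, -1)] [:: (3, 1, -1)] [::]);
  (170, 3, Cert [::] [::] [::] [:: (7, 3, 1)] [::]);
  (192, 2, Cert [::] [::] [:: (7, 6, 1)] [::] [::]);
  (192, 3, Cert [::] [::] [::] [:: (7, 6, 1)] [::]);
  (200, 2, Cert [:: 3] [:: (3, 3, 1); (3, 6, -1)] [:: (7, 6, 1)] [::] [:: (3, 3, 1); (3, 6, -1)]);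
  (200, 3, Cert [::] [::] [::] [:: (7, 3, 1)] [::]);
  (204, 1, Cert [::] [::] [:: (3, 2, 1)] [::] [::]);
  (204, 2, Cert [::] [::] [:: (7, 6, 1)] [:: (3, 2, 1)] [::]);
  (204, 3, Cert [::] [::] [::] [:: (7, 3, 1)] [::]);
  (224, 2, Cert [:: 5] [:: (5, 5, 1); (5, 6, 1)] [:: (7, 6, 1)] [::] [:: (5, 5, 1); (5, 6, 1)]);
  (224, 3, Cert [::] [::] [::] [:: (7, 5, -1)] [::]);
  (232, 2, Cert [:: 3; 5] [:: (3, 3, 1); (3, 6, -1); (5, 5, 1); (5, 6, 1)] [:: (7, 6, 1)] [::] [:: (3, 3, 1); (3, 6, -1); (5, 5, 1); (5, 6, 1)]);
  (232, 3, Cert [::] [::] [::] [:: (7, 3, 1)] [::]);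
  (234, 1, Cert [::] [::] [:: (3, 1, -1)] [::] [::]);
  (234, 2, Cert [:: 6] [:: (6, 5, 1); (6, 6, 1)] [:: (7, 5, -1)] [:: (3, 1, -1)] [:: (6, 3, -1); (6, 6, 1)]);
  (234, 3, Cert [::] [::] [::] [:: (7, 3, 1)] [::]);
  (236, 1, Cert [::] [::] [:: (3, 2, 1)] [::] [::]);
  (236, 2, Cert [:: 5] [:: (5, 5, 1); (5, 6, 1)] [:: (7, 6, 1)] [:: (3, 2, 1)] [:: (5, 3, 1); (5, 5, 1)]);
  (236, 3, Cert [::] [::] [::] [:: (7, 3, 1)] [::]);
  (238, 1, Cert [::] [::] [:: (3, 2, 1); (5, 1, -1); (5, 2, -1)] [::] [::]);
  (238, 2, Cert [::] [::] [:: (7, 6, 1)] [:: (3, 2, 1); (5, 1, -1); (5, 2, -1)] [::]);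
  (238, 3, Cert [::] [::] [::] [:: (7, 3, 1)] [::]);
  (240, 1, Cert [::] [::] [:: (5, 4, 1)] [::] [::]);
  (240, 2, Cert [::] [::] [:: (7, 6, 1)] [:: (5, 4, 1)] [::]);
  (240, 3, Cert [::] [::] [::] [:: (7, 5, -1)] [::]);
  (248, 1, Cert [::] [::] [:: (5, 4, 1)] [::] [::]);
  (248, 2, Cert [:: 3] [:: (3, 3, 1); (3, 6, -1)] [:: (7, 6, 1)] [:: (5, 4, 1)] [:: (3, 3, 1); (3, 5, 1)]);
  (248, 3, Cert [::] [::] [::] [:: (7, 3, 1)] [::]);
  (250, 1, Cert [::] [::] [:: (3, 1, -1); (3, 4, -1); (5, 4, 1)] [::] [::]);
  (250, 2, Cert [::] [::] [:: (7, 6, 1)] [:: (3, 1, -1); (3, 4, -1); (5, 4, 1)] [::]);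
  (250, 3, Cert [::] [::] [::] [:: (7, 3, 1)] [::]);
  (252, 1, Cert [::] [::] [:: (3, 2, 1); (5, 4, 1)] [::] [::]);
  (252, 2, Cert [::] [::] [:: (7, 6, 1)] [:: (3, 2, 1); (5, 4, 1)] [::]);
  (252, 3, Cert [::] [::] [::] [:: (7, 3, 1)] [::]);
  (254, 1, Cert [:: 1] [:: (1, 1, 1); (1, 2, 1); (1, 4, 1)] [:: (3, 2, 1); (5, 4, 1)] [::] [:: (1, 1, 1); (1, 2, 1); (1, 4, 1)]);
  (254, 2, Cert [::] [::] [:: (7, 6, 1)] [:: (3, 2, 1); (5, 1, -1); (5, 2, -1)] [::]);
  (254, 3, Cert [::] [::] [::] [:: (7, 3, 1)] [::]);
  (255, 1, Cert [::] [::] [:: (3, 2, 1); (5, 4, 1)] [:: (1, 0, 1)] [::]);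
  (255, 2, Cert [::] [::] [:: (7, 6, 1)] [:: (3, 2, 1); (5, 1, -1); (5, 2, -1)] [::]);
  (255, 3, Cert [::] [::] [::] [:: (7, 3, 1)] [::])
].

Definition cert_lookup (D : seq bool) (p : nat) : cert :=
  odflt (Cert [::] [::] [::] [::] [::])
    (ohead [seq e.2 | e <- cert_table & (e.1.1 == nat_of_bits D) && (e.1.2 == p)]).

Definition certs_valid : bool :=
  all (fun l => admissible_code (nth false l) ==>
         all (fun p => cert_check (nth false l) p (cert_lookup l p)) [:: 1; 2; 3]%N)
    (bitseqs 8).

Lemma certs_validP : certs_valid.
Proof. by vm_compute. Qed.

Definition admissible (D : {set 'I_3} -> bool) : Prop :=
  exists T, (forall S, D S -> S \subset T) /\
            (forall S U, D S -> S \subset U -> U \subset T -> D U).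

Definition face (D : {set 'I_3} -> bool) (q : nat) S : bool := D S && (#|S| == q).

Section LocalHomology.
Variables (D : {set 'I_3} -> bool) (p : nat).

Let config : seq bool := [seq D (set_of_code s) | s <- iota 0 8].
Let Dc : nat -> bool := nth false config.
Let c : cert := cert_lookup config p.

Definition hbasis : seq {set 'I_3} := map set_of_code (basis_codes Dc p c).
Definition hcoord S U : int := coord_code Dc p c (code_of_set S) (code_of_set U).
Definition hhomot V U : int := homot_code Dc p c (code_of_set V) (code_of_set U).
Definition hcorr S T : int := corr_code Dc p c (code_of_set S) (code_of_set T).
Definition hdual S U : int := dual_code Dc p c (code_of_set S) (code_of_set U).

Lemma config_code S : Dc (code_of_set S) = D S.
Proof.
by rewrite /Dc (nth_map 0%N) ?size_iota ?code_of_set_lt // nth_iota ?code_of_set_lt // code_of_setK.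
Qed.

Lemma face_codeE q S : face_code Dc q (code_of_set S) = face D q S.
Proof. by rewrite /face_code config_code popcount_code. Qed.

Lemma delta_codeE S U : delta (code_of_set S) (code_of_set U) = (S == U)%:Z.
Proof. by rewrite /delta (inj_eq code_of_set_inj). Qed.

Lemma mem_hbasis S : (S \in hbasis) = (code_of_set S \in basis_codes Dc p c).
Proof.
apply/mapP/idP => [[s s_B ->] | S_B]; last by exists (code_of_set S); rewrite ?code_of_setK.
by move: (s_B); rewrite mem_filter => /andP[/and3P[lt_s8 _ _] _]; rewrite set_of_codeK.
Qed.

Lemma hbasis_face S : S \in hbasis -> face D p S.
Proof. by rewrite mem_hbasis mem_filter -face_codeE => /andP[/and3P[]]. Qed.

Lemma hbasis_minimal S (i : 'I_3) : S \in hbasis -> i \in S -> ~~ D (S :\ i).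
Proof.
rewrite mem_hbasis mem_filter => /andP[/and3P[_ _ /allP min_S] _] iS.
move: (min_S i); rewrite mem_iota ltn_ord bit_code_of_set iS => /(_ isT).
by rewrite -code_of_setD1 // config_code.
Qed.

Lemma hcoord_supp S U : hcoord S U != 0 -> S \in hbasis.
Proof. by rewrite /hcoord /coord_code mem_hbasis; case: ifP; rewrite ?eqxx. Qed.

Lemma hhomot_supp V U : hhomot V U != 0 -> face D p.+1 V.
Proof. by rewrite /hhomot /homot_code face_codeE; case: ifP; rewrite ?eqxx. Qed.

Lemma hcorr_supp S T : hcorr S T != 0 -> face D p.-1 T.
Proof. by rewrite /hcorr /corr_code face_codeE; case: ifP; rewrite ?eqxx. Qed.

Lemma hdual_supp S U : hdual S U != 0 -> face D p U.
Proof. by rewrite /hdual /dual_code face_codeE; case: ifP; rewrite ?eqxx. Qed.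

Hypotheses (D_admissible : admissible D) (p_gt0 : (0 < p)%N) (p_le3 : (p <= 3)%N).

Lemma admissible_config : admissible_code Dc.
Proof.
have [T [D_sub D_up]] := D_admissible.
apply/hasP; exists (code_of_set T); first by rewrite mem_iota code_of_set_lt.
apply/andP; split; apply/all_codesP => S.
  by rewrite config_code subset_code_of_set; apply/implyP/D_sub.
apply/all_codesP => U; rewrite !config_code !subset_code_of_set.
by apply/implyP => /andP[/andP[DS sub_SU] sub_UT]; apply: D_up DS sub_SU sub_UT.
Qed.

Lemma cert_valid : cert_check Dc p c.
Proof.
have := mem_bitseqs config; rewrite size_map size_iota => config_8.
have := certs_validP; rewrite /certs_valid => /allP /(_ config config_8).
move=> /implyP /(_ admissible_config) /allP /(_ p); apply.
by move: p_gt0 p_le3; case: (p) => [|[|[|[|]]]].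
Qed.

Lemma homotopy_identity S U : face D p S -> face D p U ->
  (S == U)%:Z = hcoord S U + kdiff (hhomot^~ U) S
                + \sum_T hcorr S T * kdiff (fun V => (V == U)%:Z) T.
Proof.
have := cert_valid; rewrite /cert_check => /and4P[/all_codesP /(_ S) /all_codesP /(_ U) + _ _ _].
rewrite !face_codeE => /implyP hyp FS FU; move: (hyp (introT andP (conj FS FU))) => /eqP.
rewrite delta_codeE kdiff_codeE sum_codesE => ->; congr (_ + _).
apply: eq_bigr => T _; rewrite kdiff_codeE; congr (_ * _).
by apply: eq_kdiff => i _; rewrite delta_codeE.
Qed.

Lemma hdual_hbasis S U : S \in hbasis -> U \in hbasis -> hdual S U = (S == U)%:Z.
Proof.
have := cert_valid; rewrite /cert_check => /and4P[_ /allP dual_B _ _].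
rewrite !mem_hbasis => /dual_B /allP S_B /S_B /eqP.
by rewrite delta_codeE.
Qed.

Lemma hdual_boundary S V : S \in hbasis -> face D p.+1 V ->
  \sum_U hdual S U * kdiff (fun W => (W == V)%:Z) U = 0.
Proof.
have := cert_valid; rewrite /cert_check => /and4P[_ _ /allP dual_bd _].
rewrite mem_hbasis -face_codeE => /dual_bd /all_codesP /(_ V) /implyP hyp /hyp /eqP sum0.
rewrite -[X in _ = X]sum0 sum_codesE; apply: eq_bigr => U _; rewrite kdiff_codeE; congr (_ * _).
by apply: eq_kdiff => i _; rewrite delta_codeE.
Qed.

Lemma hbasis_cone (j : 'I_3) : (forall S, j \notin S -> D S = D (j |: S)) -> hbasis = [::].
Proof.
have := cert_valid; rewrite /cert_check => /and4P[_ _ _ /implyP cone_B].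
move=> D_cone; rewrite /hbasis (eqP (cone_B _)) //.
apply/hasP; exists (val j); first by rewrite mem_iota ltn_ord.
apply/all_codesP => S; rewrite bit_code_of_set; case: (boolP (j \in S)) => //= jNS.
by rewrite -code_of_setU1 // !config_code D_cone.
Qed.

End LocalHomology.

Section LocalCycles.
Variables (R : pzRingType) (D : {set 'I_3} -> bool) (p : nat).
Hypotheses (D_admissible : admissible D) (p_gt0 : (0 < p)%N) (p_le3 : (p <= 3)%N).
Implicit Type z : {set 'I_3} -> R.

Definition hcoords z S : R := \sum_U (hcoord D p S U)%:~R * z U.
Definition hhomotopy z V : R := \sum_U (hhomot D p V U)%:~R * z U.

Lemma hcoords_supp z S : hcoords z S != 0 -> S \in hbasis D p.
Proof.
apply: contraR => SNB; apply/eqP; rewrite /hcoords big1 // => U _.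
have [->|/hcoord_supp] := eqVneq (hcoord D p S U) 0; first by rewrite mul0r.
by rewrite (negbTE SNB).
Qed.

Lemma hhomotopy_supp z V : hhomotopy z V != 0 -> face D p.+1 V.
Proof.
apply: contraR => VNF; apply/eqP; rewrite /hhomotopy big1 // => U _.
have [->|/hhomot_supp] := eqVneq (hhomot D p V U) 0; first by rewrite mul0r.
by rewrite (negbTE VNF).
Qed.

Lemma cycle_decomposition z :
  (forall U, z U != 0 -> face D p U) ->
  (forall T, face D p.-1 T -> kdiff z T = 0) ->
  forall S, D S -> z S = hcoords z S + kdiff (hhomotopy z) S.
Proof.
move=> z_supp z_cycle S DS; have [FS|NFS] := boolP (face D p S); last first.
  have z0 : z S = 0 by apply/eqP; apply: contraR NFS; apply: z_supp.
  have coords0 : hcoords z S = 0.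
    by apply/eqP; apply: contraR NFS => /hcoords_supp; apply: hbasis_face.
  rewrite z0 coords0 add0r /kdiff big1 // => i iNS.
  have [->|/hhomotopy_supp /andP[_]] := eqVneq (hhomotopy z (i |: S)) 0; first by rewrite mulr0.
  by rewrite cardsU1 iNS eqSS => cardS; move: NFS; rewrite /face DS cardS.
have homotopy_part : \sum_U (kdiff (hhomot D p ^~ U) S)%:~R * z U = kdiff (hhomotopy z) S.
  by rewrite /hhomotopy kdiff_sum; apply: eq_bigr => U _; rewrite kdiff_intr kdiffMr.
have correction_part :
    \sum_U (\sum_T hcorr D p S T * kdiff (fun V => (V == U)%:Z) T)%:~R * z U = 0.
  under eq_bigr do rewrite intr_sum mulr_suml.
  rewrite exchange_big big1 //= => T _.
  under eq_bigr do rewrite intrM -mulrA kdiff_delta_intr.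
  rewrite -mulr_sumr -kdiff_delta.
  have [->|/hcorr_supp FT] := eqVneq (hcorr D p S T) 0; first by rewrite mul0r.
  by rewrite z_cycle // mulr0.
transitivity (\sum_U ((S == U)%:Z)%:~R * z U).
  rewrite (bigD1 S) //= eqxx mulrbz mul1r big1 ?addr0 // => U /negbTE.
  by rewrite eq_sym => ->; rewrite mul0r.
transitivity (\sum_U (hcoord D p S U + kdiff (hhomot D p ^~ U) S
               + \sum_T hcorr D p S T * kdiff (fun V => (V == U)%:Z) T)%:~R * z U).
  apply: eq_bigr => U _; have [->|/z_supp FU] := eqVneq (z U) 0; first by rewrite !mulr0.
  by rewrite -homotopy_identity.
under eq_bigr do rewrite !intrD !mulrDl.
by rewrite !big_split /= homotopy_part correction_part addr0.
Qed.

Lemma boundary_on_hbasis_eq0 (b g : {set 'I_3} -> R) :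
  (forall S, b S != 0 -> S \in hbasis D p) ->
  (forall V, g V != 0 -> face D p.+1 V) ->
  (forall S, face D p S -> b S = kdiff g S) ->
  forall S, b S = 0.
Proof.
move=> b_supp g_supp b_bd S.
have [SB|SNB] := boolP (S \in hbasis D p); last first.
  by apply/eqP; apply: contraR SNB; apply: b_supp.
transitivity (\sum_U (hdual D p S U)%:~R * b U).
  rewrite (bigD1 S) //= hdual_hbasis // eqxx mulrbz mul1r big1 ?addr0 // => U neq_US.
  have [->|/b_supp UB] := eqVneq (b U) 0; first by rewrite mulr0.
  by rewrite hdual_hbasis // eq_sym (negbTE neq_US) mulrbz mul0r.
transitivity (\sum_U (hdual D p S U)%:~R * kdiff g U).
  apply: eq_bigr => U _; have [->|/hdual_supp FU] := eqVneq (hdual D p S U) 0.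
    by rewrite !mulr0z !mul0r.
  by rewrite b_bd.
under eq_bigr do rewrite kdiff_delta mulr_sumr.
rewrite exchange_big big1 //= => V _.
have [->|/g_supp FV] := eqVneq (g V) 0; first by rewrite big1 // => U _; rewrite !mulr0.
under eq_bigr do rewrite mulrA -kdiff_delta_intr -intrM.
by rewrite -mulr_suml -intr_sum hdual_boundary // mul0r.
Qed.

End LocalCycles.

(** * Monomial ideals *)

Lemma lem_subRL (n : nat) (m1 m2 a : 'X_{1..n}) :
  (m2 <= a)%MM -> (m1 <= a - m2)%MM = (m2 + m1 <= a)%MM.
Proof.
move=> /mnm_lepP le_m2a; apply/mnm_lepP/mnm_lepP => le_m i; have := le_m i;
  by rewrite ?mnmDE ?mnmBE leq_subRL.
Qed.

Lemma lem_sub2l (n : nat) (m1 m2 a : 'X_{1..n}) : (m1 <= m2)%MM -> (a - m2 <= a - m1)%MM.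
Proof. by move=> /mnm_lepP le_m; apply/mnm_lepP => i; rewrite !mnmBE leq_sub2l. Qed.

Lemma eqm_sub2r (n : nat) (e a b : 'X_{1..n}) :
  (e <= a)%MM -> (e <= b)%MM -> (a - e == b - e)%MM = (a == b).
Proof.
move=> le_ea le_eb; apply/eqP/eqP => [eq_ab|-> //].
by rewrite -(submK le_ea) -(submK le_eb) eq_ab.
Qed.

Lemma mcoeffMX_sub (n : nat) (R : nzRingType) (q : {mpoly R[n]}) (m m' : 'X_{1..n}) :
  (q * 'X_[m])@_m' = if (m <= m')%MM then q@_(m' - m) else 0.
Proof.
case: ifPn => [le_mm'|Nle_mm']; first by rewrite -{1}(submK le_mm') addmC mcoeffMX.
apply/eqP; rewrite mcoeff_eq0 (perm_mem (msuppMX q m)).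
by apply: contra Nle_mm' => /mapP[m'' _ ->]; rewrite ?lem_addl ?lem_addr.
Qed.

Lemma mcoeff_signM (n : nat) (R : nzRingType) e (q : {mpoly R[n]}) (m : 'X_{1..n}) :
  ((-1) ^+ e * q)@_m = (-1) ^+ e * q@_m.
Proof. by elim: e => [|e IHe]; rewrite ?expr0 ?mul1r // !exprS -!mulrA !mulN1r mcoeffN IHe. Qed.

Definition in_monideal (G : seq 'X_{1..3}) m : bool := has (fun g => (g <= m)%MM) G.

Lemma in_monidealS G m m' : (m <= m')%MM -> in_monideal G m -> in_monideal G m'.
Proof.
by move=> le_mm' /hasP[g Gg le_gm]; apply/hasP; exists g => //; apply: lepm_trans le_mm'.
Qed.

Section MonomialIdeal.
Variables (k : fieldType) (G : seq 'X_{1..3}).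

Lemma mon_idealP (f : {mpoly k[3]}) :
  ideal_gen (mon_gens k G) f <-> (forall m, ~~ in_monideal G m -> f@_m = 0).
Proof.
have size_gens : size (mon_gens k G) = size G by rewrite size_map.
split=> [[c ->] m mNI | f_supp].
  rewrite raddf_sum big1 // => i _; have lt_iG : (i < size G)%N by rewrite -size_gens.
  rewrite (nth_map 0%MM) //= mcoeffMX_sub; case: ifPn => // le_gm.
  by case/hasP: mNI; exists (nth 0%MM G i); rewrite ?mem_nth.
have supp_I m : m \in msupp f -> in_monideal G m.
  by apply: contraTT => /f_supp; rewrite mcoeff_msupp => ->; rewrite eqxx.
pose idx m := find (fun g => (g <= m)%MM) G.
exists (fun i : 'I_(size (mon_gens k G)) =>
  \sum_(m <- msupp f | idx m == i) f@_m *: 'X_[m - nth 0%MM G i]).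
rewrite {1}(mpolyE f); under [RHS]eq_bigr do rewrite big_mkcond mulr_suml.
rewrite exchange_big /=; apply: eq_big_seq => m f_m.
have lt_idx : (idx m < size (mon_gens k G))%N by rewrite size_gens -has_find; apply: supp_I.
rewrite (bigD1 (Ordinal lt_idx)) //= eqxx big1 ?addr0; last first.
  move=> i neq_i; rewrite ifF ?mul0r //; apply/negbTE; apply: contra neq_i => /eqP idx_m.
  by apply/eqP/val_inj; rewrite /= idx_m.
rewrite (nth_map 0%MM) -?size_gens // -scalerAl -mpolyXD submK //.
exact: (nth_find 0%MM (supp_I m f_m)).
Qed.

Lemma mon_ideal_colon m S (g : {mpoly k[3]}) :
  (forall i, i \in S -> in_monideal G (m + U_(i))%MM) ->
  ideal_gen (subset_gens k S) g -> ideal_gen (mon_gens k G) ('X_[m] * g).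
Proof.
move=> colon_m [c ->]; apply/mon_idealP => m' m'NI.
rewrite mulr_sumr raddf_sum big1 // => i _.
have lt_iS : (i < size (enum S))%N by rewrite -(size_map (fun j => 'X_j : {mpoly k[3]})).
rewrite /= (nth_map ord0) // mulrA [_ * c i]mulrC -mulrA -mpolyXD mcoeffMX_sub.
case: ifP => // le_m'; move: m'NI; rewrite (in_monidealS le_m') //.
by apply: colon_m; rewrite -mem_enum mem_nth.
Qed.

End MonomialIdeal.

Definition edeg S : 'X_{1..3} := [multinom ((i \in S) : nat) | i < 3].

Lemma edegE S i : edeg S i = (i \in S). Proof. by rewrite mnmE. Qed.

Lemma edegU1 (i : 'I_3) T : i \notin T -> edeg (i |: T) = (edeg T + U_(i))%MM.
Proof.
move=> iNT; apply/mnmP => j; rewrite mnmDE !mnmE in_setU1 eq_sym.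
by case: (eqVneq i j) => [<-|] /=; rewrite ?(negbTE iNT) ?addn0.
Qed.

Lemma edegS S U : S \subset U -> (edeg S <= edeg U)%MM.
Proof.
move=> /subsetP sub_SU; apply/mnm_lepP => j; rewrite !edegE.
by case: (boolP (j \in S)) => // /sub_SU ->.
Qed.

(** * Strands of Koszul chains *)

Definition mface G a S : bool := (edeg S <= a)%MM && ~~ in_monideal G (a - edeg S).

Lemma mface_superset G a S U :
  mface G a S -> S \subset U -> (edeg U <= a)%MM -> mface G a U.
Proof.
move=> /andP[_ SNI] sub_SU le_Ua; rewrite /mface le_Ua /=.
by apply: contra SNI; apply: in_monidealS; apply: lem_sub2l; apply: edegS.
Qed.

Lemma mface_admissible G a : admissible (mface G a).
Proof.
exists [set i | (0 < a i)%N]; split=> [S /andP[/mnm_lepP le_Sa _] | S U FS sub_SU sub_U].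
  by apply/subsetP => i iS; rewrite inE; move: (le_Sa i); rewrite edegE iS.
apply: mface_superset FS sub_SU _; apply/mnm_lepP => i; rewrite edegE.
by case: (boolP (i \in U)) => // /(subsetP sub_U); rewrite inE.
Qed.

Lemma mface_cone G a (j : 'I_3) S :
  (\max_(g <- G) g j < a j)%N -> j \notin S -> mface G a S = mface G a (j |: S).
Proof.
move=> lt_Ga jNS; rewrite /mface edegU1 //.
have -> : (edeg S + U_(j) <= a)%MM = (edeg S <= a)%MM.
  apply/mnm_lepP/mnm_lepP => le_a i; move: (le_a i); rewrite ?mnmDE mnm1E edegE;
    case: (eqVneq j i) => [<-|_]; rewrite ?(negbTE jNS) /=; lia.
case: (boolP (edeg S <= a)%MM) => //= le_Sa; congr (~~ _); apply: eq_in_has => g Gg.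
have le_gj : (g j <= \max_(g <- G) g j)%N by apply: leq_bigmax_seq.
apply/mnm_lepP/mnm_lepP => le_g i; move: (le_g i); rewrite !mnmBE ?mnmDE mnm1E edegE;
  case: (eqVneq j i) => [<-|_]; rewrite ?(negbTE jNS) /=; lia.
Qed.

Definition gens_bound G : nat := (\max_(i < 3) \max_(g <- G) g i)%N.

Definition mbox G : seq 'X_{1..3} :=
  [seq [multinom val (f i) | i < 3]
    | f : {ffun 'I_3 -> 'I_(gens_bound G).+1} <- enum {: {ffun 'I_3 -> 'I_(gens_bound G).+1}}].

Lemma mem_mbox G a : (forall i, a i <= gens_bound G)%N -> a \in mbox G.
Proof.
move=> le_a; apply/mapP; exists [ffun i => inord (a i)]; rewrite ?mem_enum //.
by apply/mnmP => i; rewrite mnmE ffunE /= inordK // ltnS.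
Qed.

Lemma hbasis_mbox G a p :
  (0 < p)%N -> (p <= 3)%N -> hbasis (mface G a) p != [::] -> a \in mbox G.
Proof.
move=> p_gt0 p_le3 hbasis_a; case: (boolP [forall i, a i <= gens_bound G]%N).
  by move=> /forallP; apply: mem_mbox.
rewrite negb_forall => /existsP[j]; rewrite -ltnNge => lt_a.
have lt_Ga : (\max_(g <- G) g j < a j)%N.
  by apply: leq_ltn_trans lt_a; rewrite /gens_bound (bigD1 j) //= leq_maxl.
case/eqP: hbasis_a; apply: (hbasis_cone (mface_admissible G a) p_gt0 p_le3 (j := j)).
by move=> S; apply: mface_cone.
Qed.

Section Strands.
Variable k : fieldType.
Implicit Types f w : chain k.

Definition strand f a S : k := if (edeg S <= a)%MM then (f S)@_(a - edeg S) else 0.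

Lemma strandB f1 f2 a S : strand (fun T => f1 T - f2 T) a S = strand f1 a S - strand f2 a S.
Proof. by rewrite /strand; case: ifP; rewrite ?mcoeffB ?subr0. Qed.

Lemma strand_koszul_d f a T : strand (koszul_d f) a T = kdiff (strand f a) T.
Proof.
rewrite /strand /koszul_d /kdiff; case: ifPn => [le_Ta | Nle_Ta].
  rewrite raddf_sum /=; apply: eq_bigr => i iNT.
  rewrite -mulrA mcoeff_signM [_ * f _]mulrC mcoeffMX_sub; congr (_ * _).
  rewrite lem_subRL // edegU1 //; case: ifP => // _.
  by rewrite submDA addmC.
rewrite big1 // => i _; rewrite ifF ?mulr0 //; apply: contraNF Nle_Ta.
exact/lepm_trans/edegS/subsetUr.
Qed.

Lemma ideal_strandP G f T :
  ideal_gen (mon_gens k G) (f T) <-> forall a, mface G a T -> strand f a T = 0.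
Proof.
rewrite mon_idealP; split=> [f_supp a /andP[le_Ta aNI] | strand0 m mNI].
  by rewrite /strand le_Ta f_supp.
have le_Tm : (edeg T <= m + edeg T)%MM by rewrite lem_addl.
have := strand0 (m + edeg T)%MM; rewrite /strand /mface le_Tm addmK mNI.
exact.
Qed.

Lemma strand_deg q f a S : chain_deg q f -> #|S| != q -> strand f a S = 0.
Proof. by move=> f_deg /eqP cardS; rewrite /strand f_deg // mcoeff0 if_same. Qed.

Lemma strand_out_mface G f a T (i : 'I_3) :
  mface G a T -> ~~ mface G a (i |: T) -> strand f a (i |: T) = 0.
Proof.
move=> FT NF; rewrite /strand ifF //; apply: contraNF NF; apply: mface_superset FT _.
exact: subsetUr.
Qed.

Definition rstrand G f a S : k := if mface G a S then strand f a S else 0.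

Lemma kdiff_rstrand G f a T : mface G a T -> kdiff (rstrand G f a) T = kdiff (strand f a) T.
Proof.
move=> FT; apply: eq_kdiff => i iNT; rewrite /rstrand; case: ifPn => // NF.
by rewrite (strand_out_mface _ FT NF).
Qed.

End Strands.

Lemma sum_tnth_eq (R : nzRingType) (X : eqType) (s : seq X) (F : 'I_(size s) -> R) j :
  uniq s -> \sum_(j' < size s) F j' * (tnth (in_tuple s) j' == tnth (in_tuple s) j)%:R = F j.
Proof.
move=> uniq_s; rewrite (bigD1 j) //= eqxx mulr1 big1 ?addr0 // => j' neq_j'j.
by rewrite (inj_eq (elimT (tuple_uniqP (in_tuple s)) uniq_s)) (negbTE neq_j'j) mulr0.
Qed.

Lemma sum_tnth_mem (R : nzRingType) (X : eqType) (s : seq X) (F : X -> R) x :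
  uniq s -> \sum_(j < size s) F (tnth (in_tuple s) j) * (tnth (in_tuple s) j == x)%:R
            = if x \in s then F x else 0.
Proof.
move=> uniq_s; case: ifPn => [s_x | sNx].
  have lt_x : (index x s < size s)%N by rewrite index_mem.
  have := sum_tnth_eq (F \o tnth (in_tuple s)) (Ordinal lt_x) uniq_s.
  have tnth_x : tnth (in_tuple s) (Ordinal lt_x) = x by rewrite (tnth_nth x) nth_index.
  by rewrite /= tnth_x.
rewrite big1 // => j _; case: eqP => [tnth_x|]; last by rewrite mulr0.
by case/negP: sNx; rewrite -tnth_x mem_tnth.
Qed.

(** * The monomial basis *)

Section KoszulHomologyBasis.
Variables (k : fieldType) (G : seq 'X_{1..3}) (p : nat).
Hypotheses (p_gt0 : (0 < p)%N) (p_le3 : (p <= 3)%N).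
Implicit Types f w : chain k.

Definition kbasis : seq ('X_{1..3} * {set 'I_3}) :=
  undup [seq (a, A) | a <- mbox G, A <- hbasis (mface G a) p].

Lemma kbasis_uniq : uniq kbasis. Proof. exact: undup_uniq. Qed.

Lemma mem_kbasis a S : ((a, S) \in kbasis) = (S \in hbasis (mface G a) p).
Proof.
rewrite mem_undup; apply/allpairsPdep/idP => [[a' [S' [_ S'B [-> ->]]]] // | SB].
exists a, S; split=> //; by apply: (hbasis_mbox p_gt0 p_le3); apply: contraTneq SB => ->.
Qed.

Local Notation kb j := (tnth (in_tuple kbasis) j).

Definition kb_set (j : 'I_(size kbasis)) : {set 'I_3} := (kb j).2.
Definition kb_mon (j : 'I_(size kbasis)) : 'X_{1..3} := ((kb j).1 - edeg (kb_set j))%MM.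

Lemma kb_hbasis j : kb_set j \in hbasis (mface G (kb j).1) p.
Proof. by rewrite -mem_kbasis -surjective_pairing mem_tnth. Qed.

Lemma kb_mface j : mface G (kb j).1 (kb_set j).
Proof. by have /(hbasis_face (p := p)) /andP[] := kb_hbasis j. Qed.

Lemma kb_card j : #|kb_set j| = p.
Proof. by have /(hbasis_face (p := p)) /andP[_ /eqP] := kb_hbasis j. Qed.

Lemma kb_colon j g :
  ideal_gen (subset_gens k (kb_set j)) g -> ideal_gen (mon_gens k G) ('X_[kb_mon j] * g).
Proof.
apply: mon_ideal_colon => i iS.
have /andP[le_Sa _] := kb_mface j.
have le_S'a : (edeg (kb_set j :\ i) <= (kb j).1)%MM.
  by apply: lepm_trans le_Sa; apply/edegS/subD1set.
have := hbasis_minimal (kb_hbasis j) iS; rewrite /mface le_S'a negbK.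
have e_S : edeg (kb_set j) = (edeg (kb_set j :\ i) + U_(i))%MM.
  by rewrite -edegU1 ?setD11 ?setD1K.
apply: in_monidealS; apply/mnm_lepP => l; move/mnm_lepP: le_Sa => /(_ l).
rewrite /kb_mon e_S !(mnmBE, mnmDE) mnm1E.
by move: (edeg _ l) (nat_of_bool (i == l)) ((kb j).1 l) => e u b; lia.
Qed.

Lemma strand_comb (c : 'I_(size kbasis) -> k) a T : (edeg T <= a)%MM ->
  strand (comb kb_set kb_mon c) a T = \sum_j c j * (kb j == (a, T))%:R.
Proof.
move=> le_Ta; rewrite /strand le_Ta /comb raddf_sum; apply: eq_bigr => j _.
rewrite /= mcoeffZ; congr (_ * _); case: (eqVneq T (kb_set j)) => [eq_T|neq_T].
  have /andP[le_Sa _] := kb_mface j; subst T.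
  rewrite mcoeffX /kb_mon eqm_sub2r // /kb_set; case: (kb j) => a' S' /=.
  by congr ((nat_of_bool _)%:R); apply/eqP/eqP => [-> | [->]].
rewrite raddf0; case: eqP => [kb_j|]; last by [].
by case/eqP: neq_T; rewrite /kb_set kb_j.
Qed.

Lemma chain_deg_comb (c : 'I_(size kbasis) -> k) : chain_deg p (comb kb_set kb_mon c).
Proof.
move=> T cardT; rewrite /comb big1 // => j _.
by rewrite ifF ?scaler0 //; apply: contraNF (introN eqP cardT) => /eqP ->; rewrite kb_card.
Qed.

Lemma kbasis_free (c : 'I_(size kbasis) -> k) :
  is_boundary G p (comb kb_set kb_mon c) -> forall j, c j = 0.
Proof.
move=> [_ [g [g_deg comb_bd]]] j; set a := (kb j).1.
pose b T := \sum_j' c j' * (kb j' == (a, T))%:R.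
pose g' V := if face (mface G a) p.+1 V then strand g a V else 0.
have <- : b (kb_set j) = c j.
  by rewrite /b -(sum_tnth_eq c j kbasis_uniq) /kb_set /a -surjective_pairing.
apply: (boundary_on_hbasis_eq0 (mface_admissible G a) p_gt0 p_le3 (g := g')) => [S | V | T FT].
- apply: contraR => SNB; apply/eqP; rewrite /b big1 // => j' _.
  case: eqP => [kb_j'|]; last by rewrite mulr0.
  by case/negP: SNB; rewrite -mem_kbasis -kb_j' mem_tnth.
- by rewrite /g'; case: ifP; rewrite ?eqxx.
have /andP[FT_a _] := FT; have /andP[le_Ta _] := FT_a.
have := (ideal_strandP G (fun T => comb kb_set kb_mon c T - koszul_d g T) T).1 (comb_bd T) a FT_a.
rewrite strandB strand_comb // strand_koszul_d => /eqP; rewrite subr_eq0 /b => /eqP ->.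
apply: eq_kdiff => i iNT; rewrite /g'; case: ifPn => // /nandP[NF | card_iT].
  exact: (strand_out_mface _ FT_a NF).
exact: (strand_deg _ g_deg card_iT).
Qed.

Definition chain_mdegs w : seq 'X_{1..3} :=
  undup [seq (m + edeg A)%MM | A <- enum {set 'I_3}, m <- msupp (w A)].

Lemma rstrand_mdegs w a S : rstrand G w a S != 0 -> a \in chain_mdegs w.
Proof.
rewrite /rstrand /strand; case: ifP => [/andP[le_Sa _]|]; last by rewrite eqxx.
rewrite le_Sa mem_undup => w_a; apply/allpairsPdep; exists S, (a - edeg S)%MM.
by rewrite mem_enum mcoeff_msupp submK.
Qed.

Definition homotopy_lift w : chain k := fun V =>
  \sum_(a <- chain_mdegs w) hhomotopy (mface G a) p (rstrand G w a) V *: 'X_[a - edeg V].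

Lemma strand_homotopy_lift w a V :
  strand (homotopy_lift w) a V = hhomotopy (mface G a) p (rstrand G w a) V.
Proof.
have hsupp b : hhomotopy (mface G b) p (rstrand G w b) V != 0 -> (edeg V <= b)%MM.
  by move=> /hhomotopy_supp /andP[/andP[]].
have [le_Va|Nle_Va] := boolP (edeg V <= a)%MM; last first.
  by rewrite /strand (negbTE Nle_Va); apply/esym/eqP; apply: contraR Nle_Va => /hsupp.
rewrite /strand le_Va /homotopy_lift raddf_sum /=.
under eq_bigr => b _ do rewrite mcoeffZ mcoeffX.
have [a_w|aNw] := boolP (a \in chain_mdegs w).
  rewrite (bigD1_seq a) ?undup_uniq //= eqxx mulr1 big1 ?addr0 // => b neq_ba.
  have [-> | /hsupp le_Vb] := eqVneq (hhomotopy (mface G b) p (rstrand G w b) V) 0.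
    by rewrite mul0r.
  by rewrite eqm_sub2r // (negbTE neq_ba) mulr0.
rewrite big1_seq => [|b /andP[_ b_w]].
  rewrite /hhomotopy big1 // => U _.
  have [->|/rstrand_mdegs] := eqVneq (rstrand G w a U) 0; first by rewrite mulr0.
  by rewrite (negbTE aNw).
have [-> | /hsupp le_Vb] := eqVneq (hhomotopy (mface G b) p (rstrand G w b) V) 0.
  by rewrite mul0r.
rewrite eqm_sub2r //; case: eqP => [eq_ba|]; last by rewrite mulr0.
by case/negP: aNw; rewrite -eq_ba.
Qed.

Lemma chain_deg_homotopy_lift w : chain_deg p.+1 (homotopy_lift w).
Proof.
move=> V cardV; rewrite /homotopy_lift big1 // => a _.
have [->|/hhomotopy_supp /andP[_ /eqP]] := eqVneq (hhomotopy (mface G a) p (rstrand G w a) V) 0.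
  by rewrite scale0r.
by move/cardV.
Qed.

Lemma kbasis_span w : is_cycle G p w ->
  exists c : 'I_(size kbasis) -> k, is_boundary G p (fun T => w T - comb kb_set kb_mon c T).
Proof.
move=> [w_deg w_cycle].
pose c j := hcoords (mface G (kb j).1) p (rstrand G w (kb j).1) (kb j).2.
exists c; split.
  by move=> T cardT; rewrite w_deg // chain_deg_comb // subr0.
exists (homotopy_lift w); split; first exact: chain_deg_homotopy_lift.
move=> T.
apply/(ideal_strandP G (fun T => w T - comb kb_set kb_mon c T - koszul_d (homotopy_lift w) T)).
move=> a FT; have /andP[le_Ta _] := FT.
pose z := rstrand G w a.
have z_supp U : z U != 0 -> face (mface G a) p U.
  rewrite /z /rstrand /face; case: ifP => [_ /= | _]; last by rewrite eqxx.
  by apply: contraR => cardU; apply/eqP; apply: strand_deg w_deg cardU.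
have z_cycle T' : face (mface G a) p.-1 T' -> kdiff z T' = 0.
  move=> /andP[FT' _]; rewrite kdiff_rstrand // -strand_koszul_d.
  exact: (ideal_strandP _ _ _).1 (w_cycle T') a FT'.
have -> : strand (fun T => w T - comb kb_set kb_mon c T - koszul_d (homotopy_lift w) T) a T
    = strand w a T - strand (comb kb_set kb_mon c) a T - strand (koszul_d (homotopy_lift w)) a T.
  by rewrite /strand; case: ifP; rewrite ?mcoeffB ?subr0.
rewrite strand_comb // strand_koszul_d.
under eq_kdiff => V _ do rewrite strand_homotopy_lift.
rewrite (sum_tnth_mem (fun x => hcoords (mface G x.1) p (rstrand G w x.1) x.2)) ?kbasis_uniq //.
have -> : strand w a T = z T by rewrite /z /rstrand FT.
rewrite (cycle_decomposition (mface_admissible G a) p_gt0 p_le3 z_supp z_cycle FT).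
rewrite mem_kbasis; case: ifPn => [_|TNB].
  by rewrite /= -/z [hcoords _ _ z T + _]addrC addrK subrr.
have -> : hcoords (mface G a) p z T = 0 by apply/eqP; apply: contraR TNB; apply: hcoords_supp.
by rewrite add0r subr0 subrr.
Qed.

End KoszulHomologyBasis.

Theorem mainTheorem5 (k : fieldType) (G : seq 'X_{1..3})
  (HI0 : exists f : {mpoly k[3]}, ideal_gen (mon_gens k G) f /\ f != 0)
  (HIm2 : forall f : {mpoly k[3]},
     ideal_gen (mon_gens k G) f -> ideal_gen (msq_gens k) f)
  (d : nat) (Hd : is_depth k G d) (p : nat) (Hp : (1 <= p <= 3 - d)%N) :
  exists (n : nat) (S : 'I_n -> {set 'I_3}) (m : 'I_n -> 'X_{1..3}),
    (forall j : 'I_n, #|S j| = p /\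
       forall g : {mpoly k[3]}, ideal_gen (subset_gens k (S j)) g ->
         ideal_gen (mon_gens k G) ('X_[m j] * g)) /\
    (forall c : 'I_n -> k, is_boundary G p (comb S m c) -> forall j, c j = 0) /\
    (forall w : chain k, is_cycle G p w ->
       exists c : 'I_n -> k, is_boundary G p (fun T => w T - comb S m c T)).
Proof.
have /andP[p_gt0 le_p3d] := Hp.
have p_le3 : (p <= 3)%N by apply: leq_trans le_p3d (leq_subr _ _).
exists (size (kbasis G p)), (kb_set (G := G) (p := p)), (kb_mon (G := G) (p := p)).
split; first by move=> j; split; [exact: kb_card | exact: kb_colon].
split; first exact: kbasis_free.
exact: kbasis_span.
Qed.
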